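(* Let $S$ be a numerical semigroup with multiplicity $e$ and minimal generators $e<a_1<\dots<a_t$, and let $0\le i<e$. Then ${\rm d}_{\max}(S_i)=\max_{u\in{\rm adj}(S_i)}|\mathcal R(u)|$, where ${\rm d}_{\max}(S_i)=\max_{s\in S_i}{\rm d}_{\max}(s;S)$.
   Context: A numerical semigroup is a submonoid of $(\mathbb N,+)$ with finite complement. An $S$-factorization of $n\in S$ is $(c_0,\dots,c_t)\in\mathbb N^{t+1}$ with $c_0e+\sum c_ia_i=n$, of length $\sum c_i$. ${\rm ord}(n;S)$ is the maximal such length, and ${\rm d}_{\max}(n;S)$ is the number of $S$-factorizations of $n$ of length ${\rm ord}(n;S)$. Let $d_i=a_i-e$, $B=\langle e,d_1,\dots,d_t\rangle$, $\mathcal D=(e,d_1,\dots,d_t)$. A $B^{\mathcal D}$-factorization of $b\in B$ is $(x_0,\dots,x_t)\in\mathbb N^{t+1}$ with $x_0e+\sum x_id_i=b$, of length $\sum x_i$. $\min{\rm ord}(b;B^{\mathcal D})$ is the minimal such length, and $\mathcal P(b)$ is the set of all of them. Put ${\rm adj}(s)=s-{\rm ord}(s;S)e$ and $S_i=\{s\in S:s\equiv i\pmod e\}$. Write ${\rm adj}(S_i)=\{{\rm adj}(s):s\in S_i\}=\{u_0<u_1<\cdots\}$. Define $\mathcal R(u_0)=\mathcal P(u_0)$ and, for $j>0$, $\mathcal R(u_j)=\{\mathbf x\in\mathcal P(u_j):|\mathbf x|<\min{\rm ord}(u_{j-1};B^{\mathcal D})-\frac{u_j-u_{j-1}}{e}\}$.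 *)

From mathcomp Require Import all_boot.
Set Implicit Arguments.
Unset Strict Implicit.
Unset Printing Implicit Defensive.

(* When all g_j are positive
   (always the case below) every coordinate is <= n, so we may take the
   coordinates in 'I_n.+1 without losing any factorization. *)
Definition factvec (g : seq nat) (n : nat) := {ffun 'I_(size g) -> 'I_n.+1}.

Definition facts (g : seq nat) (n : nat) : {set factvec g n} :=
  [set x : factvec g n | \sum_(j < size g) (x j : nat) * nth 0 g j == n].

Definition flen (g : seq nat) (n : nat) (x : factvec g n) : nat :=
  \sum_(j < size g) (x j : nat).

Definition inmon (g : seq nat) (n : nat) : bool := facts g n != set0.

Definition Sgens (e : nat) (a : seq nat) : seq nat := e :: a.

Definition Dgens (e : nat) (a : seq nat) : seq nat := e :: [seq ai - e | ai <- a].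

Definition ordS (e : nat) (a : seq nat) (n : nat) : nat :=
  \max_(x in facts (Sgens e a) n) flen x.

Definition dmax (e : nat) (a : seq nat) (n : nat) : nat :=
  #|[set x in facts (Sgens e a) n | flen x == ordS e a n]|.

(* min ord(b; B^D): minimal length of a B^D-factorization of b.  (All entries
   of D are >= 1, so every length is <= b and the default value b is never
   reached when b is in B.) *)
Definition minordB (e : nat) (a : seq nat) (b : nat) : nat :=
  \big[minn/b]_(x in facts (Dgens e a) b) flen x.

Definition Pset (e : nat) (a : seq nat) (b : nat) := facts (Dgens e a) b.

Definition adj (e : nat) (a : seq nat) (s : nat) : nat := s - ordS e a s * e.

Definition inSi (e : nat) (a : seq nat) (i s : nat) : Prop :=
  inmon (Sgens e a) s /\ s %% e = i.

Definition in_adjSi (e : nat) (a : seq nat) (i u : nat) : Prop :=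
  exists s, inSi e a i s /\ adj e a s = u.

Definition Rset_succ (e : nat) (a : seq nat) (u u' : nat) :=
  [set x in Pset e a u | (flen x + (u - u') %/ e < minordB e a u')%N].

(* |R(u)| = m, for u \in adj(S_i) = {u_0 < u_1 < ...}:
   either u = u_0 (the least element) and R(u) = P(u), or u = u_j with j > 0
   and u' = u_{j-1} is the largest element of adj(S_i) below u. *)
Definition Rcard (e : nat) (a : seq nat) (i u m : nat) : Prop :=
  ((forall v, in_adjSi e a i v -> u <= v) /\ #|Pset e a u| = m)
  \/ (exists u', [/\ in_adjSi e a i u', u' < u,
                     (forall v, in_adjSi e a i v -> v < u -> v <= u')
                   & #|Rset_succ e a u u'| = m]).

Definition numsg_min_gens (e : nat) (a : seq nat) : Prop :=
  [/\ 0 < e,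
      sorted ltn (Sgens e a),
      (exists N, forall n, N <= n -> inmon (Sgens e a) n)
    & forall k, k < size (Sgens e a) ->
        ~~ inmon (take k (Sgens e a) ++ drop k.+1 (Sgens e a))
                 (nth 0 (Sgens e a) k)].

From mathcomp Require Import all_boot zify order.
From Stdlib Require Import Classical.

(* Since a_j = e + d_j, an S-factorization (c_0, y) of s of length L satisfies
   s = L e + sum_j y_j d_j with |y| <= L.  Hence the factorizations of s of
   maximal length ord(s) correspond to the B^D-factorizations (0, y) of adj(s)
   with |y| <= ord(s), and by maximality of ord(s) every B^D-factorization of
   adj(s) of length at most ord(s) has x_0 = 0; so d_max(s) is the number of
   elements of P(adj s) of length at most ord(s).  This is at most |P(adj s)|,
   and if u' < adj(s) is another adjusted value in the same class, maximality of
   ord(s) forces ord(s) + (adj(s) - u')/e < min ord(u'), so it is at most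
   |R(adj s)|.  Conversely s_0 + u_0 e realizes |P(u_0)| and
   (min ord(u_{j-1}) - (u_j - u_{j-1})/e - 1) e + u_j realizes |R(u_j)|.
   As adj is non-increasing along s |-> s + e, adj(S_i) is bounded and the
   maximum exists. *)

Set Implicit Arguments.
Unset Strict Implicit.
Unset Printing Implicit Defensive.

Fixpoint dotn (l g : seq nat) : nat :=
  match l, g with x :: l', y :: g' => x * y + dotn l' g' | _, _ => 0 end.

Lemma big_ord_dotn (l g : seq nat) : size l = size g ->
  \sum_(j < size g) nth 0 l j * nth 0 g j = dotn l g.
Proof.
elim: g l => [|y g IH] [|x l] //=; first by rewrite big_ord0.
by case=> Hs; rewrite big_ord_recl IH.
Qed.

Lemma sumn_big_ord (l : seq nat) : sumn l = \sum_(j < size l) nth 0 l j.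
Proof. by rewrite sumnE (big_nth 0) big_mkord. Qed.

Lemma nth_leq_dotn (l g : seq nat) j : all (fun y => 0 < y) g -> size l = size g ->
  nth 0 l j <= dotn l g.
Proof.
elim: g l j => [|y g IH] [|x l] [|j] //= /andP[y_gt0 g_gt0] [Hs].
- by rewrite (leq_trans (leq_pmulr x y_gt0)) ?leq_addr.
- by rewrite (leq_trans (IH _ _ g_gt0 Hs)) ?leq_addl.
Qed.

Lemma sumn_leq_dotn (l g : seq nat) : all (fun y => 0 < y) g -> size l = size g ->
  sumn l <= dotn l g.
Proof.
elim: g l => [|y g IH] [|x l] //= /andP[y_gt0 g_gt0] [Hs].
by rewrite leq_add ?leq_pmulr ?IH.
Qed.

Lemma dotn_subn e (a y : seq nat) : all (fun x => e <= x) a -> size y = size a ->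
  dotn y a = dotn y [seq x - e | x <- a] + sumn y * e.
Proof.
elim: a y => [|z a IH] [|x y] //= /andP[le_ez le_ea] [Hs].
rewrite IH // mulnDl mulnBr; move: (leq_mul (leqnn x) le_ez); lia.
Qed.

Lemma eq_modn_add_divn d u v : v <= u -> u = v %[mod d] -> u = v + (u - v) %/ d * d.
Proof. by move=> le_vu /eqP; rewrite eqn_mod_dvd // => /divnK ->; rewrite subnKC. Qed.

Lemma card_in_cancel (T1 T2 : finType) (A : {set T1}) (B : {set T2})
    (f : T1 -> T2) (g : T2 -> T1) :
  {in A, forall x, f x \in B} -> {in B, forall y, g y \in A} ->
  {in A, cancel f g} -> {in B, cancel g f} -> #|A| = #|B|.
Proof.
have card_le (U1 U2 : finType) (X : {set U1}) (Y : {set U2}) (h : U1 -> U2) h' :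
    {in X, forall x, h x \in Y} -> {in X, cancel h h'} -> #|X| <= #|Y|.
  move=> hXY hK; rewrite -(card_in_imset (can_in_inj hK)).
  by apply/subset_leq_card/subsetP => _ /imsetP[x xX ->]; exact: hXY.
move=> fAB gBA fK gK; apply/eqP.
by rewrite eqn_leq (card_le _ _ _ _ _ _ fAB fK) (card_le _ _ _ _ _ _ gBA gK).
Qed.

Lemma bounded_ex_max (P : nat -> Prop) n : (exists k, P k) -> (forall k, P k -> k <= n) ->
  exists m, P m /\ forall k, P k -> k <= m.
Proof.
elim: n => [|n IH] [k Pk] le_Pn.
  have Ek : k = 0 by apply/eqP; rewrite -leqn0; exact: le_Pn.
  by exists 0; split=> [|j /le_Pn]; rewrite -?Ek.
have [Pn1|nPn1] := classic (P n.+1); first by exists n.+1.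
apply: IH; first by exists k.
move=> j Pj; rewrite -ltnS ltn_neqAle le_Pn // andbT.
by apply/eqP=> Ej; apply: nPn1; rewrite -Ej.
Qed.

Section FactorizationVectors.

Variables (g : seq nat) (n : nat).
Implicit Types (x : factvec g n) (l : seq nat).

Definition coords x : seq nat := [seq (x j : nat) | j <- enum 'I_(size g)].

Definition fhead x : nat := head 0 (coords x).
Definition ftail x : seq nat := behead (coords x).

Lemma size_coords x : size (coords x) = size g.
Proof. by rewrite size_map size_enum_ord. Qed.

Lemma nth_coords x (j : 'I_(size g)) : nth 0 (coords x) j = x j.
Proof. by rewrite (nth_map j) ?nth_ord_enum // size_enum_ord. Qed.

Lemma coords_inj : injective coords.
Proof.
move=> x1 x2 Ex; apply/ffunP => j; apply/val_inj.
by have := congr1 (nth 0 ^~ (val j)) Ex; rewrite /= !nth_coords.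
Qed.

Lemma in_factsE x : (x \in facts g n) = (dotn (coords x) g == n).
Proof.
rewrite inE -big_ord_dotn ?size_coords //.
by congr (_ == _); apply: eq_bigr => j _; rewrite nth_coords.
Qed.

Lemma flen_coords x : flen x = sumn (coords x).
Proof.
by rewrite sumn_big_ord size_coords; apply: eq_bigr => j _; rewrite nth_coords.
Qed.

Definition fact_of l : factvec g n := [ffun j : 'I_(size g) => inord (nth 0 l j)].

Lemma coords_fact_of l : size l = size g -> (forall j, nth 0 l j <= n) ->
  coords (fact_of l) = l.
Proof.
move=> Hs le_ln; rewrite -[RHS](mkseq_nth 0) /mkseq Hs -val_enum_ord -map_comp.
by apply: eq_map => j; rewrite /= ffunE inordK // ltnS.
Qed.

Hypothesis size_g_gt0 : 0 < size g.

Lemma coords_head_tail x : coords x = fhead x :: ftail x.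
Proof. by rewrite /fhead /ftail; case: (coords x) (size_coords x) size_g_gt0 => [<-|]. Qed.

Lemma flen_head_tail x : flen x = fhead x + sumn (ftail x).
Proof. by rewrite flen_coords {1}coords_head_tail. Qed.

Lemma size_ftail x : size (ftail x) = (size g).-1.
Proof. by rewrite /ftail size_behead size_coords. Qed.

Lemma fact_eq x1 x2 : fhead x1 = fhead x2 -> ftail x1 = ftail x2 -> x1 = x2.
Proof. by move=> Eh Et; apply: coords_inj; rewrite !coords_head_tail Eh Et. Qed.

End FactorizationVectors.

Section NumericalSemigroup.

Variables (e : nat) (a : seq nat).
Hypotheses (e_gt0 : 0 < e) (a_gt_e : all (fun x => e < x) a).

Local Notation dgens := [seq x - e | x <- a].

Definition is_Sfact s c0 y : Prop := size y = size a /\ s = (c0 + sumn y) * e + dotn y dgens.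
Definition is_Dfact b x0 y : Prop := size y = size a /\ b = x0 * e + dotn y dgens.

Lemma Sgens_gt0 : all (fun y => 0 < y) (Sgens e a).
Proof. by rewrite /= e_gt0; apply/allP => x /(allP a_gt_e); exact: leq_ltn_trans. Qed.

Lemma Dgens_gt0 : all (fun y => 0 < y) (Dgens e a).
Proof.
by rewrite /= e_gt0; apply/allP => _ /mapP[x /(allP a_gt_e) ? ->]; rewrite subn_gt0.
Qed.

Lemma dotn_Sgens c0 y : size y = size a ->
  dotn (c0 :: y) (Sgens e a) = (c0 + sumn y) * e + dotn y dgens.
Proof.
move=> Hs; rewrite /= (@dotn_subn e) //; last by apply/allP=> x /(allP a_gt_e)/ltnW.
by rewrite mulnDl addnA addnAC.
Qed.

Lemma in_factsSP s (x : factvec (Sgens e a) s) :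
  x \in facts (Sgens e a) s <-> is_Sfact s (fhead x) (ftail x).
Proof.
have Hs : size (ftail x) = size a by rewrite size_ftail.
rewrite in_factsE coords_head_tail // dotn_Sgens // /is_Sfact eq_sym.
by split=> [/eqP|[_ /eqP]].
Qed.

Lemma in_factsDP b (x : factvec (Dgens e a) b) :
  x \in facts (Dgens e a) b <-> is_Dfact b (fhead x) (ftail x).
Proof.
have Hs : size (ftail x) = size a by rewrite size_ftail /= size_map.
by rewrite in_factsE coords_head_tail // /is_Dfact eq_sym; split=> [/eqP|[_ /eqP]].
Qed.

Lemma fact_of_Sfact s c0 y (x := fact_of (Sgens e a) s (c0 :: y)) :
  is_Sfact s c0 y -> [/\ x \in facts (Sgens e a) s, fhead x = c0 & ftail x = y].
Proof.
case=> Hs Es; have Ec : coords x = c0 :: y.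
  apply: coords_fact_of => [|j]; first by rewrite /= Hs.
  by rewrite Es -dotn_Sgens // nth_leq_dotn ?Sgens_gt0 //= Hs.
have [Eh Et] : fhead x = c0 /\ ftail x = y by rewrite /fhead /ftail Ec.
by split=> //; apply/in_factsSP; rewrite Eh Et.
Qed.

Lemma fact_of_Dfact b x0 y (x := fact_of (Dgens e a) b (x0 :: y)) :
  is_Dfact b x0 y -> [/\ x \in facts (Dgens e a) b, fhead x = x0 & ftail x = y].
Proof.
case=> Hs Eb; have Ec : coords x = x0 :: y.
  apply: coords_fact_of => [|j]; first by rewrite /= size_map Hs.
  by rewrite Eb; apply: (nth_leq_dotn _ Dgens_gt0); rewrite /= size_map Hs.
have [Eh Et] : fhead x = x0 /\ ftail x = y by rewrite /fhead /ftail Ec.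
by split=> //; apply/in_factsDP; rewrite Eh Et.
Qed.

Lemma inmon_Sfact s c0 y : is_Sfact s c0 y -> inmon (Sgens e a) s.
Proof. by case/fact_of_Sfact => x_facts _ _; apply/set0Pn; eexists; exact: x_facts. Qed.

Lemma inmon_DP b : inmon (Dgens e a) b <-> exists x0 y, is_Dfact b x0 y.
Proof.
split; first by case/set0Pn => x /in_factsDP Hx; exists (fhead x), (ftail x).
by case=> x0 [y /fact_of_Dfact[x_facts _ _]]; apply/set0Pn; eexists; exact: x_facts.
Qed.

Lemma ordS_ge s c0 y : is_Sfact s c0 y -> c0 + sumn y <= ordS e a s.
Proof.
case/fact_of_Sfact => x_facts Eh Et.
by have := @leq_bigmax_cond _ _ (@flen _ _) _ x_facts; rewrite flen_head_tail // Eh Et.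
Qed.

Lemma ordS_attained s : inmon (Sgens e a) s ->
  exists c0 y, is_Sfact s c0 y /\ c0 + sumn y = ordS e a s.
Proof.
rewrite /inmon -card_gt0 => /(eq_bigmax_cond (@flen _ _))[x /in_factsSP Hx Ex].
by exists (fhead x), (ftail x); rewrite /ordS Ex flen_head_tail.
Qed.

Lemma minordB_le b x0 y : is_Dfact b x0 y -> minordB e a b <= x0 + sumn y.
Proof.
case/fact_of_Dfact => x_facts Eh Et.
have := @Order.TotalTheory.bigmin_le_cond _ nat _ _ _ _ (@flen _ _) x_facts.
by rewrite flen_head_tail // Eh Et; apply.
Qed.

Lemma flen_Pset b x : x \in Pset e a b -> flen x <= b.
Proof.
move/in_factsDP=> [Hs Eb]; rewrite flen_head_tail //.
apply: (leq_trans (sumn_leq_dotn (l := fhead x :: ftail x) Dgens_gt0 _)).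
  by rewrite /= size_map Hs.
exact/eq_leq/esym.
Qed.

Lemma minordB_attained b : inmon (Dgens e a) b ->
  exists x0 y, is_Dfact b x0 y /\ x0 + sumn y = minordB e a b.
Proof.
case/set0Pn => x x_facts.
have [z /in_factsDP Hz Ez] :=
  @Order.TotalTheory.eq_bigmin _ nat _ b _ _ (@flen _ _) x_facts (@flen_Pset b).
by exists (fhead z), (ftail z); rewrite /minordB Ez flen_head_tail.
Qed.

Lemma Sfact_of_Dfact L u x0 y : is_Dfact u x0 y -> sumn y <= L + x0 ->
  is_Sfact (L * e + u) (L + x0 - sumn y) y.
Proof. by case=> Hs ->; split; rewrite // subnK // mulnDl addnA. Qed.

Lemma leq_ordS_Dfact L u x0 y : is_Dfact u x0 y -> sumn y <= L + x0 ->
  L + x0 <= ordS e a (L * e + u).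
Proof. by move=> Hu le_yL; have := ordS_ge (Sfact_of_Dfact Hu le_yL); rewrite subnK. Qed.

Lemma ordS_adjE s : inmon (Sgens e a) s -> s = ordS e a s * e + adj e a s.
Proof.
case/ordS_attained => c0 [y [[_ Es] Ey]].
by rewrite /adj subnKC // {2}Es -Ey leq_addr.
Qed.

Lemma adj_Dfact s : inmon (Sgens e a) s ->
  exists y, is_Dfact (adj e a s) 0 y /\ sumn y <= ordS e a s.
Proof.
case/ordS_attained => c0 [y [[Hs Es] Ey]]; exists y.
by rewrite /is_Dfact /adj -Ey {1}Es addKn leq_addl.
Qed.

Lemma adj_modn s : inmon (Sgens e a) s -> adj e a s = s %[mod e].
Proof. by move/ordS_adjE => {2}->; rewrite modnMDl. Qed.

Lemma adj_inB s : inmon (Sgens e a) s -> inmon (Dgens e a) (adj e a s).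
Proof. by case/adj_Dfact => y [Hy _]; apply/inmon_DP; exists 0, y. Qed.

Lemma minordB_adj s : inmon (Sgens e a) s -> minordB e a (adj e a s) <= ordS e a s.
Proof. by case/adj_Dfact => y [Hy le_yL]; exact: leq_trans (minordB_le Hy) le_yL. Qed.

Lemma inmon_addMe s m : inmon (Sgens e a) s -> inmon (Sgens e a) (s + m * e).
Proof.
move=> Hs; have [y [Hy le_yL]] := adj_Dfact Hs.
rewrite {1}(ordS_adjE Hs) addnAC -mulnDl.
by apply: inmon_Sfact (Sfact_of_Dfact Hy _); rewrite addn0 (leq_trans le_yL) ?leq_addr.
Qed.

Lemma adj_addMe s m : inmon (Sgens e a) s -> adj e a (s + m * e) <= adj e a s.
Proof.
move=> Hs; have [y [Hy le_yL]] := adj_Dfact Hs.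
have le_ord : ordS e a s + m <= ordS e a (s + m * e).
  have := @leq_ordS_Dfact (ordS e a s + m) _ _ _ Hy.
  rewrite addn0 mulnDl addnAC -ordS_adjE //; apply.
  exact: leq_trans le_yL (leq_addr _ _).
rewrite /adj (leq_trans (leq_sub2l _ (leq_mul le_ord (leqnn e)))) //.
by rewrite mulnDl subnDr.
Qed.

Lemma adj_leq_of_leq s s' : inmon (Sgens e a) s -> s <= s' -> s' = s %[mod e] ->
  adj e a s' <= adj e a s.
Proof. by move=> Hs le_ss' /(eq_modn_add_divn le_ss') ->; exact: adj_addMe. Qed.

Lemma ordS_lt_minordB s u' : inmon (Sgens e a) s -> inmon (Dgens e a) u' ->
  u' < adj e a s -> adj e a s = u' %[mod e] ->
  ordS e a s + (adj e a s - u') %/ e < minordB e a u'.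
Proof.
move=> Hs /minordB_attained[z0 [z [Hz Ez]]] lt_u'u /(eq_modn_add_divn (ltnW lt_u'u)) Eu.
set K := (adj e a s - u') %/ e in Eu *; set L := ordS e a s.
have K_gt0 : 0 < K by move: lt_u'u; rewrite Eu; case: (K) => //; rewrite mul0n addn0 ltnn.
rewrite ltnNge; apply/negP => le_mLK.
have Es : s = (L + K) * e + u' by rewrite {1}(ordS_adjE Hs) Eu mulnDl addnCA addnC.
have := @leq_ordS_Dfact (L + K) u' z0 z Hz.
rewrite -Es -/L; move: le_mLK; rewrite -Ez; lia.
Qed.

Definition Pset_le u L := [set x in Pset e a u | flen x <= L].

Lemma fhead_eq0 s x : inmon (Sgens e a) s -> x \in Pset e a (adj e a s) ->
  flen x <= ordS e a s -> fhead x = 0.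
Proof.
move=> Hs /in_factsDP Hx; rewrite flen_head_tail // => le_xL.
have := leq_ordS_Dfact (L := ordS e a s) Hx.
rewrite -ordS_adjE //; move: le_xL; lia.
Qed.

Lemma ftail_maxfact s x : inmon (Sgens e a) s -> x \in facts (Sgens e a) s ->
  flen x = ordS e a s -> is_Dfact (adj e a s) 0 (ftail x).
Proof.
move=> Hs /in_factsSP[Hy Ex] Lx; split=> //; apply/eqP.
by rewrite -(eqn_add2l (ordS e a s * e)) -ordS_adjE // {1}Ex -Lx flen_head_tail.
Qed.

Lemma dmax_Pset_le s : inmon (Sgens e a) s ->
  dmax e a s = #|Pset_le (adj e a s) (ordS e a s)|.
Proof.
move=> Hs; rewrite /dmax; set L := ordS e a s; set u := adj e a s.
set A := [set x in _ | _].
pose f (x : factvec (Sgens e a) s) := fact_of (Dgens e a) u (0 :: ftail x).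
pose g (z : factvec (Dgens e a) u) := fact_of (Sgens e a) s (L - sumn (ftail z) :: ftail z).
have fP x : x \in A -> [/\ f x \in Pset_le u L, fhead (f x) = 0 & ftail (f x) = ftail x].
  rewrite inE => /andP[x_facts /eqP Lx].
  have [fx_facts Eh Et] := fact_of_Dfact (ftail_maxfact Hs x_facts Lx).
  rewrite /f Eh Et; split=> //; rewrite inE flen_head_tail // Eh Et andbC.
  by rewrite add0n -Lx flen_head_tail // leq_addl; exact: fx_facts.
have gP z : z \in Pset_le u L ->
    [/\ g z \in A, fhead (g z) = L - sumn (ftail z) & ftail (g z) = ftail z].
  rewrite inE => /andP[z_facts le_zL]; have z0 := fhead_eq0 Hs z_facts le_zL.
  move/in_factsDP: z_facts; rewrite flen_head_tail // z0 in le_zL * => Hy.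
  have := Sfact_of_Dfact (L := L) Hy; rewrite addn0 -ordS_adjE // => /(_ le_zL) Hs'.
  have [gz_facts Eh Et] := fact_of_Sfact Hs'.
  rewrite /g Eh Et; split=> //; rewrite inE flen_head_tail // Eh Et subnK // eqxx andbT.
  exact: gz_facts.
apply: (card_in_cancel (f := f) (g := g)) => [x /fP[] | z /gP[] | x xA | z zB] //.
- have [fxB _ Et] := fP x xA; have [_ Eh' Et'] := gP _ fxB.
  move: xA; rewrite inE flen_head_tail // => /andP[_ /eqP Lx].
  by apply: fact_eq; rewrite // ?Eh' ?Et' Et // -Lx addnK.
- have [gzA _ Et] := gP z zB; have [_ Eh' Et'] := fP _ gzA.
  move: zB; rewrite inE => /andP[z_facts le_zL].
  by apply: fact_eq; rewrite // ?Eh' ?Et' ?Et // (fhead_eq0 Hs z_facts le_zL).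
Qed.

Lemma Pset_le_sub u L : Pset_le u L \subset Pset e a u.
Proof. by apply/subsetP => x; rewrite inE => /andP[]. Qed.

Lemma Pset_le_id u L : u <= L -> Pset_le u L = Pset e a u.
Proof.
move=> le_uL; apply/setP => x; rewrite inE; apply/andb_idr => xP.
exact: leq_trans (flen_Pset xP) le_uL.
Qed.

Lemma Pset_le_Rset u u' L : (L + (u - u') %/ e).+1 = minordB e a u' ->
  Pset_le u L = Rset_succ e a u u'.
Proof. by move=> EM; apply/setP => x; rewrite !inE -EM ltnS leq_add2r. Qed.

Lemma Pset_le_sub_Rset s u' : inmon (Sgens e a) s -> inmon (Dgens e a) u' ->
  u' < adj e a s -> adj e a s = u' %[mod e] ->
  Pset_le (adj e a s) (ordS e a s) \subset Rset_succ e a (adj e a s) u'.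
Proof.
move=> Hs u'B lt_u'u Eu; apply/subsetP => x; rewrite !inE => /andP[-> le_xL] /=.
by apply: leq_ltn_trans (ordS_lt_minordB Hs u'B lt_u'u Eu); rewrite leq_add2r.
Qed.

Lemma adj_min_witness s0 (u := adj e a s0) (s := s0 + u * e) : inmon (Sgens e a) s0 ->
  [/\ inmon (Sgens e a) s, s = s0 %[mod e], adj e a s <= u & u <= ordS e a s].
Proof.
move=> Hs0; have [y [Hy le_yL]] := adj_Dfact Hs0.
split; [exact: inmon_addMe | by rewrite /s addnC modnMDl | exact: adj_addMe |].
have := @leq_ordS_Dfact (ordS e a s0 + u) _ _ _ Hy.
rewrite addn0 mulnDl addnAC -ordS_adjE // => /(_ (leq_trans le_yL (leq_addr _ _))).
exact: leq_trans (leq_addl _ _).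
Qed.

Lemma adj_succ_witness s0 s1 (u := adj e a s0) (u' := adj e a s1)
    (L := (minordB e a u' - (u - u') %/ e).-1) (s := L * e + u) :
  inmon (Sgens e a) s0 -> inmon (Sgens e a) s1 -> u' < u -> s1 = s0 %[mod e] ->
  [/\ inmon (Sgens e a) s, s = s0 %[mod e], u' < adj e a s, adj e a s <= u
    & (L + (u - u') %/ e).+1 = minordB e a u'].
Proof.
move=> Hs0 Hs1 lt_u'u Es10.
have Eu : u = u' %[mod e] by rewrite /u /u' !adj_modn.
have := ordS_lt_minordB Hs0 (adj_inB Hs1) lt_u'u Eu; rewrite -/u -/u'.
have := eq_modn_add_divn (ltnW lt_u'u) Eu; rewrite -/L.
set K := (u - u') %/ e; set M := minordB e a u' => Eu' lt_KM.
have EM : (L + K).+1 = M by rewrite /L; move: lt_KM; clear; lia.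
have [y [Hy le_yL]] := adj_Dfact Hs0.
have le_yL' : sumn y <= L + 0 by rewrite addn0 /L; move: le_yL lt_KM; clear; lia.
have Hs : inmon (Sgens e a) s := inmon_Sfact (Sfact_of_Dfact Hy le_yL').
have le_Ls : L <= ordS e a s by have := leq_ordS_Dfact Hy le_yL'; rewrite addn0.
have Es : s + e = u' + M * e by rewrite /s -EM Eu' mulSnr mulnDl; clear; lia.
have le_ss1 : s + e <= s1.
  rewrite Es [X in _ <= X](ordS_adjE Hs1) addnC leq_add2r leq_mul2r.
  by rewrite minordB_adj ?orbT.
have le_u's : u' <= adj e a s.
  apply: adj_leq_of_leq => //; first exact: leq_trans (leq_addr e s) le_ss1.
  by rewrite Es10 /s modnMDl /u adj_modn.
split=> //.
- by rewrite /s modnMDl /u adj_modn.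
- rewrite ltn_neqAle le_u's andbT; apply/eqP => Eadj.
  have := minordB_adj Hs; rewrite -Eadj -/M => le_Ms.
  move: Es; rewrite {1}(ordS_adjE Hs) -Eadj => Es.
  by move: (leq_mul le_Ms (leqnn e)) Es e_gt0; clear; lia.
- rewrite /adj (leq_trans (leq_sub2l _ (leq_mul le_Ls (leqnn e)))) //.
  by rewrite /s addKn.
Qed.

Section Residue.

Variable i : nat.

Lemma in_adjSi_modn u : in_adjSi e a i u -> u %% e = i.
Proof. by case=> s [[Hs <-] <-]; rewrite adj_modn. Qed.

Lemma in_adjSi_inB u : in_adjSi e a i u -> inmon (Dgens e a) u.
Proof. by case=> s [[Hs _] <-]; exact: adj_inB. Qed.

Lemma dmax_attains_Pset u : in_adjSi e a i u -> (forall v, in_adjSi e a i v -> u <= v) ->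
  exists s, inSi e a i s /\ dmax e a s = #|Pset e a u|.
Proof.
case=> s0 [[Hs0 Hi] <-] Hmin; have [Hs Es le_adj le_ord] := adj_min_witness Hs0.
have Hsi : inSi e a i (s0 + adj e a s0 * e) by split; rewrite // Es.
have Eadj : adj e a (s0 + adj e a s0 * e) = adj e a s0.
  by apply/eqP; rewrite eqn_leq le_adj Hmin //; exists (s0 + adj e a s0 * e).
by exists (s0 + adj e a s0 * e); rewrite dmax_Pset_le // Eadj Pset_le_id.
Qed.

Lemma dmax_attains_Rset u u' : in_adjSi e a i u -> in_adjSi e a i u' -> u' < u ->
    (forall v, in_adjSi e a i v -> v < u -> v <= u') ->
  exists s, inSi e a i s /\ dmax e a s = #|Rset_succ e a u u'|.
Proof.
case=> s0 [[Hs0 Hi0] <-]; case=> s1 [[Hs1 Hi1] <-] lt_u'u Hpred.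
have Es10 : s1 = s0 %[mod e] by rewrite Hi0 Hi1.
have [Hs Es lt_u's le_su EM] := adj_succ_witness Hs0 Hs1 lt_u'u Es10.
move: Hs Es lt_u's le_su EM; set L := _.-1; set s := L * e + _ => Hs Es lt_u's le_su EM.
have Hsi : inSi e a i s by split; rewrite // Es.
have Eadj : adj e a s = adj e a s0.
  apply/eqP; rewrite eqn_leq le_su leqNgt; apply/negP => lt_s.
  by have := Hpred _ (ex_intro _ s (conj Hsi erefl)) lt_s; rewrite leqNgt lt_u's.
have EL : ordS e a s = L.
  apply/eqP; rewrite -(eqn_pmul2r e_gt0) -(eqn_add2r (adj e a s)) -ordS_adjE //.
  by rewrite Eadj.
by exists s; rewrite dmax_Pset_le // Eadj EL (Pset_le_Rset EM).
Qed.

Lemma Rcard_attained u k : in_adjSi e a i u -> Rcard e a i u k ->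
  exists s, inSi e a i s /\ dmax e a s = k.
Proof.
move=> Hu [[Hmin <-]|[u' [Hu' lt_u'u Hpred <-]]].
- exact: dmax_attains_Pset.
- exact: dmax_attains_Rset.
Qed.

Lemma dmax_le_Rcard s : inSi e a i s -> exists k, Rcard e a i (adj e a s) k /\ dmax e a s <= k.
Proof.
move=> [Hs Hi]; set u := adj e a s.
have Hu : in_adjSi e a i u by exists s.
have [[v lt_vu]|no_pred] := classic (exists v, in_adjSi e a i v /\ v < u).
- have [u' [[Hu' lt_u'u] Hmax]] :=
    bounded_ex_max (ex_intro _ v lt_vu) (fun k Hk => ltnW (proj2 Hk)).
  exists #|Rset_succ e a u u'|; split.
    by right; exists u'; split=> // w Hw lt_wu; exact: Hmax.
  rewrite dmax_Pset_le //; apply/subset_leq_card/Pset_le_sub_Rset => //.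
    exact: in_adjSi_inB Hu'.
  by apply/eqP; rewrite (in_adjSi_modn Hu) (in_adjSi_modn Hu').
- exists #|Pset e a u|; split.
    left; split=> // w Hw; rewrite leqNgt; apply/negP => lt_wu; apply: no_pred; by exists w.
  by rewrite dmax_Pset_le //; apply/subset_leq_card/Pset_le_sub.
Qed.

Lemma Rcard_leq u k : Rcard e a i u k -> k <= u.+1 ^ size (Dgens e a).
Proof.
have le_P : #|Pset e a u| <= u.+1 ^ size (Dgens e a).
  by have := max_card (mem (Pset e a u)); rewrite card_ffun !card_ord.
case=> [[_ <-] // | [u' [_ _ _ <-]]].
by apply/(leq_trans _ le_P)/subset_leq_card/subsetP => x; rewrite inE => /andP[].
Qed.

Lemma in_adjSi_bounded s : inSi e a i s -> exists ub, forall u, in_adjSi e a i u -> u <= ub.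
Proof.
move=> [Hs Hi]; have Hex : exists s, inmon (Sgens e a) s && (s %% e == i).
  by exists s; rewrite Hs Hi eqxx.
case: (ex_minnP Hex) => smin /andP[Hsmin /eqP Hi_min] Hmin.
exists (adj e a smin) => _ [s' [[Hs' Hi'] <-]].
by apply: adj_leq_of_leq; rewrite // ?Hmin ?Hs' ?Hi' ?eqxx // Hi_min.
Qed.

End Residue.

End NumericalSemigroup.

Theorem corollary3p10 (e : nat) (a : seq nat) (i : nat) :
  numsg_min_gens e a -> i < e ->
  exists m : nat,
    [/\ (exists s, inSi e a i s /\ dmax e a s = m),
        (forall s, inSi e a i s -> dmax e a s <= m),
        (exists u, in_adjSi e a i u /\ Rcard e a i u m)
      & (forall u k, in_adjSi e a i u -> Rcard e a i u k -> k <= m)].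
Proof.
case=> e_gt0 /(order_path_min ltn_trans) a_gt_e [N HN] _ lt_ie.
have Hs0 : inSi e a i (N * e + i).
  split; last by rewrite modnMDl modn_small.
  by apply: HN; rewrite (leq_trans (leq_pmulr N e_gt0)) ?leq_addr.
have [ub Hub] := in_adjSi_bounded e_gt0 a_gt_e Hs0.
pose Rcards k := exists u, in_adjSi e a i u /\ Rcard e a i u k.
have [m [[u [Hu Hm]] Hmax]] : exists m, Rcards m /\ forall k, Rcards k -> k <= m.
  apply: (@bounded_ex_max _ (ub.+1 ^ size (Dgens e a))).
    have [k [Hk _]] := dmax_le_Rcard e_gt0 a_gt_e Hs0.
    by exists k, (adj e a (N * e + i)); split=> //; exists (N * e + i).
  move=> k [v [Hv Hk]]; apply: leq_trans (Rcard_leq Hk) _.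
  by rewrite leq_exp2r // ltnS Hub.
exists m; split; [exact: Rcard_attained Hu Hm | | by exists u | ].
- move=> s Hs; have [k [Hk le_dk]] := dmax_le_Rcard e_gt0 a_gt_e Hs.
  by apply: leq_trans le_dk (Hmax k _); exists (adj e a s); split=> //; exists s.
- by move=> v k Hv Hk; apply: Hmax; exists v.
Qed.
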